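(* Let $x_0,\dots,x_d\in\mathbb{D}$ be distinct and $w_0,w_1\in\mathbb{C}^n$. Suppose there exists $\gamma>0$ such that $|x_0-x_1|\le\gamma$ and $\mathrm{dist}([x_0,x_1],\{x_2,\dots,x_d\})\ge2\gamma$, where $[x_0,x_1]$ is the real line segment from $x_0$ to $x_1$. Let $P$ be the unique $\mathbb{C}^n$-valued polynomial of degree at most $d$ with $P(x_0)=w_0$, $P(x_1)=w_1$, $P(x_j)=0$ for $2\le j\le d$. Then there exist constants $L_0,L_1$ depending only on $\gamma$ and $d$ such that $$\sup_{\zeta\in\mathbb{D}}\|P(\zeta)\|\le L_1\left\|\frac{w_1-w_0}{x_1-x_0}\right\|+L_0\|w_0\|.$$
   Context: $\mathbb{D}$ is the unit disk in $\mathbb{C}$ and $\|\cdot\|$ the Euclidean norm on $\mathbb{C}^n$. *)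

From mathcomp Require Import all_boot all_order all_algebra.
From mathcomp Require Import all_classical all_reals.
From mathcomp Require Export complex.
Set Implicit Arguments. Unset Strict Implicit. Unset Printing Implicit Defensive.
Import Order.TTheory GRing.Theory Num.Theory.
Local Open Scope ring_scope.

Definition cabs (R : rcfType) (z : R[i]) : R := Normc.normc z.

Definition vnorm (R : rcfType) (n : nat) (v : 'I_n -> R[i]) : R :=
  Num.sqrt (\sum_(i < n) cabs (v i) ^+ 2).

Definition in_disk (R : rcfType) (z : R[i]) : Prop := cabs z < 1.

Definition seg_pt (R : rcfType) (x0 x1 : R[i]) (t : R) : R[i] :=
  x0 + (t%:C)%C * (x1 - x0).

(* Let Q be the monic polynomial whose roots are the nodes x_2, ..., x_d.
   Each coordinate P_k vanishes at these nodes and has degree at most d, so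
   P_k = s_k Q with s_k affine, hence
     s_k(z) = s_k(x0) + (z - x0) (s_k(x1) - s_k(x0)) / (x1 - x0),
   where s_k(x_i) = P_k(x_i) / Q(x_i).  The divided difference of s_k is that
   of P_k divided by Q(x1), plus P_k(x0) times the divided difference of 1/Q.
   All nodes lie in the disk and x_2, ..., x_d are 2 gamma away from x0 and x1,
   so |Q| <= 2^(d-1) on the disk, |Q(x0)|, |Q(x1)| >= (2 gamma)^(d-1) and Q is
   (d-1) 2^(d-2)-Lipschitz there: this bounds |P_k(z)| by a combination of
   |(w1_k - w0_k) / (x1 - x0)| and |w0_k| with constants depending only on d
   and gamma, and summing squares over k gives the estimate for the norm. *)

From mathcomp Require Import all_boot all_order all_algebra.
From mathcomp Require Import all_classical all_reals.
From mathcomp Require Import complex.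
From mathcomp Require Import ring zify.
Set Implicit Arguments. Unset Strict Implicit. Unset Printing Implicit Defensive.
Import Order.TTheory GRing.Theory Num.Theory.
Local Open Scope ring_scope.

Section ComplexModulus.
Variable R : rcfType.
Implicit Types x y z : R[i].

Lemma cabs_ge0 z : 0 <= cabs z.
Proof. by case: z => a b; apply: sqrtr_ge0. Qed.

Lemma cabs0 : cabs (0 : R[i]) = 0.
Proof. exact: Normc.normc0. Qed.

Lemma cabs1 : cabs (1 : R[i]) = 1.
Proof. exact: Normc.normc1. Qed.

Lemma cabsM x y : cabs (x * y) = cabs x * cabs y.
Proof. exact: Normc.normcM. Qed.

Lemma cabsV x : cabs x^-1 = (cabs x)^-1.
Proof. exact: Normc.normcV. Qed.

Lemma cabs_gt0 z : (0 < cabs z) = (z != 0).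
Proof.
rewrite lt_def cabs_ge0 andbT; apply/idP/idP; apply: contraNN => /eqP.
  by move->; rewrite cabs0.
by move/Normc.eq0_normc->.
Qed.

Lemma le_cabsD x y : cabs (x + y) <= cabs x + cabs y.
Proof. exact: le_normcD. Qed.

Lemma cabs_distC x y : cabs (x - y) = cabs (y - x).
Proof. by rewrite /cabs -normcN opprB. Qed.

Lemma le_cabsB x y : cabs (x - y) <= cabs x + cabs y.
Proof. by rewrite /cabs -[Normc.normc y]normcN; apply: le_cabsD. Qed.

Lemma cabs_prod (I : Type) (r : seq I) (F : I -> R[i]) :
  cabs (\prod_(i <- r) F i) = \prod_(i <- r) cabs (F i).
Proof. exact: (big_morph _ cabsM cabs1). Qed.

End ComplexModulus.

Section ProductBounds.
Variables (R : rcfType) (I : eqType).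
Implicit Types (r : seq I) (F G : I -> R[i]) (c e : R).

Lemma cabs_prod_le r F c :
  {in r, forall i, cabs (F i) <= c} -> cabs (\prod_(i <- r) F i) <= c ^+ size r.
Proof.
move=> F_le; rewrite cabs_prod -iter_mulr_1 -count_predT -big_const_seq.
rewrite big_seq_cond [X in _ <= X]big_seq_cond.
by apply: ler_prod => i /andP[ri _]; rewrite cabs_ge0 F_le.
Qed.

Lemma cabs_prod_ge r F c : 0 <= c ->
  {in r, forall i, c <= cabs (F i)} -> c ^+ size r <= cabs (\prod_(i <- r) F i).
Proof.
move=> c_ge0 F_ge; rewrite cabs_prod -iter_mulr_1 -count_predT -big_const_seq.
rewrite big_seq_cond [X in _ <= X]big_seq_cond.
by apply: ler_prod => i /andP[ri _]; rewrite c_ge0 F_ge.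
Qed.

Lemma cabs_prodB_le r F G c e : 0 <= c ->
  {in r, forall i, [/\ cabs (F i) <= c, cabs (G i) <= c & cabs (F i - G i) <= e]} ->
  cabs (\prod_(i <- r) F i - \prod_(i <- r) G i) <= (size r)%:R * c ^+ (size r).-1 * e.
Proof.
move=> c_ge0; elim: r => [|i r IHr] FG_le.
  by rewrite !big_nil subrr cabs0 mul0r mul0r.
have [Fi_le _ FGi_le] := FG_le i (mem_head _ _).
have FGr_le :
    {in r, forall j, [/\ cabs (F j) <= c, cabs (G j) <= c & cabs (F j - G j) <= e]}.
  by move=> j rj; apply: FG_le; rewrite in_cons rj orbT.
have Gr_le : cabs (\prod_(j <- r) G j) <= c ^+ size r.
  by apply: cabs_prod_le => j /FGr_le[].
have IH := IHr FGr_le.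
rewrite !big_cons.
set Fr := \prod_(j <- r) F j; set Gr := \prod_(j <- r) G j.
have -> : F i * Fr - G i * Gr = F i * (Fr - Gr) + (F i - G i) * Gr by ring.
apply: le_trans (le_cabsD _ _) _; rewrite !cabsM.
have e_ge0 : 0 <= e := le_trans (cabs_ge0 _) FGi_le.
have -> : (size (i :: r))%:R * c ^+ (size (i :: r)).-1 * e
    = c * ((size r)%:R * c ^+ (size r).-1 * e) + e * c ^+ size r.
  by rewrite /=; case: (size r) => [|n]; rewrite ?exprS -?natr1; ring.
by apply: lerD; apply: ler_pM; rewrite ?cabs_ge0.
Qed.

End ProductBounds.

Lemma vnorm_le_comb (R : rcfType) (n : nat) (u p q : 'I_n -> R[i]) (A B : R) :
  0 <= A -> 0 <= B ->
  (forall k, cabs (u k) <= A * cabs (p k) + B * cabs (q k)) ->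
  vnorm u <= 2 * A * vnorm p + 2 * B * vnorm q.
Proof.
move=> A_ge0 B_ge0 u_le; rewrite /vnorm.
set Sp := \sum_(k < n) cabs (p k) ^+ 2; set Sq := \sum_(k < n) cabs (q k) ^+ 2.
have Sp_ge0 : 0 <= Sp by apply: sumr_ge0 => k _; apply: sqr_ge0.
have Sq_ge0 : 0 <= Sq by apply: sumr_ge0 => k _; apply: sqr_ge0.
have Su_le : \sum_(k < n) cabs (u k) ^+ 2 <= 2 * A ^+ 2 * Sp + 2 * B ^+ 2 * Sq.
  rewrite !mulr_sumr -big_split /=; apply: ler_sum => k _.
  have uk_sqr_le : cabs (u k) ^+ 2 <= (A * cabs (p k) + B * cabs (q k)) ^+ 2.
    by rewrite lerXn2r ?nnegrE ?u_le ?(le_trans _ (u_le k)) ?cabs_ge0.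
  apply: le_trans uk_sqr_le _; rewrite -subr_ge0.
  set a := cabs (p k); set b := cabs (q k).
  have -> : 2 * A ^+ 2 * a ^+ 2 + 2 * B ^+ 2 * b ^+ 2 - (A * a + B * b) ^+ 2
      = (A * a - B * b) ^+ 2 by ring.
  exact: sqr_ge0.
apply: le_trans (ler_wsqrtr Su_le) _.
have := sqr_sqrtr Sp_ge0; have := sqr_sqrtr Sq_ge0.
have := sqrtr_ge0 Sp; have := sqrtr_ge0 Sq.
move: (Num.sqrt Sp) (Num.sqrt Sq) => sp sq sp_ge0 sq_ge0 <- <-.
rewrite -[X in _ <= X]ger0_norm -?sqrtr_sqr; last by rewrite addr_ge0 // !mulr_ge0.
apply: ler_wsqrtr; rewrite -subr_ge0.
have -> : (2 * A * sp + 2 * B * sq) ^+ 2 - (2 * A ^+ 2 * sp ^+ 2 + 2 * B ^+ 2 * sq ^+ 2)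
    = 2 * (A * sp) ^+ 2 + 2 * (B * sq) ^+ 2 + 8 * (A * sp) * (B * sq) by ring.
by rewrite !addr_ge0 ?mulr_ge0 ?sqr_ge0.
Qed.

Lemma horner_linear_interp (F : fieldType) (s : {poly F}) (x0 x1 z : F) :
  (size s <= 2)%N -> x0 != x1 ->
  s.[z] = s.[x0] + (z - x0) * ((s.[x1] - s.[x0]) / (x1 - x0)).
Proof.
move=> s_size x01; rewrite !(horner_coef_wide _ s_size) !big_ord_recr !big_ord0 /=.
by field; rewrite subr_eq0 eq_sym.
Qed.

Lemma prod_XsubC_factor (F : fieldType) (rs : seq F) (p : {poly F}) :
  uniq rs -> all (root p) rs -> (size p <= (size rs).+2)%N ->
  exists2 s : {poly F}, p = s * \prod_(r <- rs) ('X - r%:P) & (size s <= 2)%N.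
Proof.
move=> rs_uniq p_roots p_size.
have [s p_eq] := uniq_roots_prod_XsubC p_roots (etrans (uniq_rootsE rs) rs_uniq).
exists s => //; have [->|s_neq0] := eqVneq s 0; first by rewrite size_poly0.
move: p_size; rewrite p_eq size_Mmonic ?monic_prod_XsubC // size_prod_XsubC addnS /=.
lia.
Qed.

Lemma two_point_estimate (R : rcfType) (p Q s : {poly R[i]}) (x0 x1 z : R[i])
    (m M K rho : R) :
  p = s * Q -> (size s <= 2)%N -> x0 != x1 -> 0 < m ->
  m <= cabs Q.[x0] -> m <= cabs Q.[x1] -> cabs Q.[z] <= M ->
  cabs (Q.[x0] - Q.[x1]) <= K * cabs (x0 - x1) -> cabs (z - x0) <= rho ->
  cabs p.[z] <= M * rho / m * cabs ((p.[x1] - p.[x0]) / (x1 - x0))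
                + M * (m^-1 + rho * K / m ^+ 2) * cabs p.[x0].
Proof.
move=> p_eq s_size x01 m_gt0 Qx0_ge Qx1_ge Qz_le Q_lip zx0_le.
have m_ge0 := ltW m_gt0.
have x10_gt0 : 0 < cabs (x0 - x1) by rewrite cabs_gt0 subr_eq0.
have Qx0_gt0 : 0 < cabs Q.[x0] := lt_le_trans m_gt0 Qx0_ge.
have Qx1_gt0 : 0 < cabs Q.[x1] := lt_le_trans m_gt0 Qx1_ge.
have K_ge0 : 0 <= K.
  by rewrite -(pmulr_lge0 _ x10_gt0); apply: le_trans Q_lip; apply: cabs_ge0.
have invQx0_le : (cabs Q.[x0])^-1 <= m^-1 by rewrite lef_pV2 ?posrE.
have invQx1_le : (cabs Q.[x1])^-1 <= m^-1 by rewrite lef_pV2 ?posrE.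
(* [c] is the divided difference of [1 / Q] at [x0] and [x1]. *)
pose c := (Q.[x0] - Q.[x1]) / (Q.[x0] * Q.[x1] * (x1 - x0)).
have c_le : cabs c <= K / m ^+ 2.
  rewrite /c cabsM cabsV !cabsM (cabs_distC x1) ler_pdivrMr ?mulr_gt0 //.
  apply: le_trans Q_lip _.
  have -> : K * cabs (x0 - x1) = K / m ^+ 2 * (m * m * cabs (x0 - x1)).
    by field; rewrite gt_eqF.
  apply: ler_wpM2l; first by apply: divr_ge0 => //; exact: exprn_ge0.
  by apply: ler_pM; rewrite ?mulr_ge0 ?cabs_ge0 ?lexx //; apply: ler_pM.
have -> : p.[z] = Q.[z] * (z - x0) / Q.[x1] * ((p.[x1] - p.[x0]) / (x1 - x0))
                  + Q.[z] * (Q.[x0]^-1 + (z - x0) * c) * p.[x0].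
  rewrite p_eq !hornerM (horner_linear_interp z s_size x01) /c.
  by field; rewrite subr_eq0 eq_sym x01 -!cabs_gt0 Qx0_gt0 Qx1_gt0.
apply: le_trans (le_cabsD _ _) _; rewrite !cabsM !cabsV.
apply: lerD; apply: ler_wpM2r; rewrite ?mulr_ge0 ?invr_ge0 ?cabs_ge0 //.
  apply: ler_pM; rewrite ?mulr_ge0 ?invr_ge0 ?cabs_ge0 //.
  by apply: ler_pM; rewrite ?cabs_ge0.
apply: ler_pM; rewrite ?cabs_ge0 //.
apply: le_trans (le_cabsD _ _) _; rewrite cabsV cabsM.
by rewrite -[rho * K / _]mulrA; apply: lerD => //; apply: ler_pM; rewrite ?cabs_ge0.
Qed.

Section ValuesFrom.
Variables (T : eqType) (d : nat) (f : 'I_d.+1 -> T).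

Definition values_from (a : nat) : seq T :=
  [seq f (inord j) | j <- iota a (d.+1 - a)].

Lemma size_values_from a : size (values_from a) = (d.+1 - a)%N.
Proof. by rewrite size_map size_iota. Qed.

Lemma values_fromP a t :
  t \in values_from a -> exists2 j : 'I_d.+1, (a <= j)%N & t = f j.
Proof.
case/mapP => j; rewrite mem_iota => /andP[a_le_j j_lt] ->.
by exists (inord j); rewrite // inordK //; lia.
Qed.

Lemma values_from_uniq a : injective f -> uniq (values_from a).
Proof.
move=> f_inj; rewrite map_inj_in_uniq ?iota_uniq // => i j; rewrite !mem_iota.
move=> /andP[a_le_i i_lt] /andP[a_le_j j_lt] /f_inj /(congr1 val).
by rewrite /= !inordK //; lia.
Qed.

End ValuesFrom.

Section TwoPointInterpolation.
Variable R : rcfType.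

(* Let Q be the monic polynomial vanishing at n nodes of the closed unit disk
   at distance at least delta from x0 and x1.  Then 2^n bounds |Q| on the disk,
   delta^n bounds |Q(x0)| and |Q(x1)| from below, and n 2^(n-1) is a Lipschitz
   constant of Q on the disk: these are M, m and K of [two_point_estimate],
   with rho = 2. *)
Definition interp_slope_bound (n : nat) (delta : R) : R :=
  2 ^+ n * 2 / delta ^+ n.

Definition interp_value_bound (n : nat) (delta : R) : R :=
  2 ^+ n * ((delta ^+ n)^-1 + 2 * (n%:R * 2 ^+ n.-1) / delta ^+ n ^+ 2).

Lemma interp_slope_bound_ge0 n delta : 0 <= delta -> 0 <= interp_slope_bound n delta.
Proof. by move=> delta_ge0; rewrite !(mulr_ge0, invr_ge0, exprn_ge0). Qed.

Lemma interp_value_bound_ge0 n delta : 0 <= delta -> 0 <= interp_value_bound n delta.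
Proof.
by move=> delta_ge0; rewrite !(mulr_ge0, addr_ge0, invr_ge0, exprn_ge0, ler0n).
Qed.

Variables (rs : seq R[i]) (x0 x1 : R[i]) (delta : R).
Hypotheses (delta_gt0 : 0 < delta) (x01 : x0 != x1) (rs_uniq : uniq rs).
Hypotheses (x0_disk : cabs x0 <= 1) (x1_disk : cabs x1 <= 1).
Hypothesis rs_disk : {in rs, forall r, cabs r <= 1}.
Hypothesis rs_far0 : {in rs, forall r, delta <= cabs (x0 - r)}.
Hypothesis rs_far1 : {in rs, forall r, delta <= cabs (x1 - r)}.

Lemma two_point_interp_bound (p : {poly R[i]}) (z : R[i]) :
  (size p <= (size rs).+2)%N -> all (root p) rs -> cabs z <= 1 ->
  cabs p.[z] <= interp_slope_bound (size rs) delta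
                  * cabs ((p.[x1] - p.[x0]) / (x1 - x0))
                + interp_value_bound (size rs) delta * cabs p.[x0].
Proof.
move=> p_size p_roots z_disk.
have [s p_eq s_size] := prod_XsubC_factor rs_uniq p_roots p_size.
set Q := \prod_(r <- rs) _ in p_eq.
have QE y : Q.[y] = \prod_(r <- rs) (y - r).
  by rewrite horner_prod; apply: eq_bigr => r _; rewrite hornerXsubC.
have dist_le y : cabs y <= 1 -> {in rs, forall r, cabs (y - r) <= 2}.
  move=> y_disk r /rs_disk r_disk.
  exact: le_trans (le_cabsB _ _) (lerD y_disk r_disk).
apply: (two_point_estimate p_eq s_size x01 (exprn_gt0 _ delta_gt0)).
- by rewrite QE; apply: cabs_prod_ge (ltW delta_gt0) rs_far0.
- by rewrite QE; apply: cabs_prod_ge (ltW delta_gt0) rs_far1.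
- by rewrite QE; apply: cabs_prod_le; apply: dist_le.
- rewrite !QE; apply: cabs_prodB_le => // r r_rs.
  by rewrite opprB addrA subrK !dist_le.
- exact: le_trans (le_cabsB _ _) (lerD z_disk x0_disk).
Qed.

End TwoPointInterpolation.

Lemma seg_pt0 (R : rcfType) (x0 x1 : R[i]) : seg_pt x0 x1 0 = x0.
Proof. by rewrite /seg_pt rmorph0 mul0r addr0. Qed.

Lemma seg_pt1 (R : rcfType) (x0 x1 : R[i]) : seg_pt x0 x1 1 = x1.
Proof. by rewrite /seg_pt rmorph1 mul1r addrC subrK. Qed.

Theorem lemma6p2 (R : realType) (d : nat) (gamma : R) :
  (1 <= d)%N -> 0 < gamma ->
  exists L0 L1 : R,
  forall (n : nat) (x : 'I_d.+1 -> R[i]) (w0 w1 : 'I_n -> R[i])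
         (P : 'I_n -> {poly R[i]}),
    (forall j, in_disk (x j)) ->
    injective x ->
    cabs (x (inord 0) - x (inord 1)) <= gamma ->
    (forall (j : 'I_d.+1) (t : R), (2 <= j)%N -> 0 <= t <= 1 ->
        2 * gamma <= cabs (x j - seg_pt (x (inord 0)) (x (inord 1)) t)) ->
    (forall k, (size (P k) <= d.+1)%N) ->
    (forall k, (P k).[x (inord 0)] = w0 k) ->
    (forall k, (P k).[x (inord 1)] = w1 k) ->
    (forall (j : 'I_d.+1) k, (2 <= j)%N -> (P k).[x j] = 0) ->
    forall zeta : R[i], in_disk zeta ->
      vnorm (fun k => (P k).[zeta])
        <= L1 * vnorm (fun k => (w1 k - w0 k) / (x (inord 1) - x (inord 0)))
           + L0 * vnorm w0.
Proof.
move=> d_ge1 gamma_gt0.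
have two_gamma_ge0 : 0 <= 2 * gamma by rewrite mulr_ge0 ?ltW.
exists (2 * interp_value_bound d.-1 (2 * gamma)),
       (2 * interp_slope_bound d.-1 (2 * gamma)).
move=> n x w0 w1 P x_disk x_inj _ x_far P_size P_x0 P_x1 P_xj zeta zeta_disk.
set rs := values_from x 2.
have rs_size : size rs = d.-1 by rewrite size_values_from subSS subn1.
have x01 : x (inord 0) != x (inord 1) by rewrite (inj_eq x_inj) -val_eqE /= !inordK.
apply: vnorm_le_comb; rewrite ?interp_slope_bound_ge0 ?interp_value_bound_ge0 // => k.
rewrite -P_x0 -P_x1 -rs_size.
apply: two_point_interp_bound; rewrite ?values_from_uniq //.
- by rewrite mulr_gt0.
- exact: ltW (x_disk _).
- exact: ltW (x_disk _).
- by move=> r /values_fromP[j _ ->]; apply: ltW (x_disk _).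
- move=> r /values_fromP[j j_ge2 ->]; rewrite cabs_distC.
  by have := x_far j 0 j_ge2; rewrite seg_pt0 lexx ler01; apply.
- move=> r /values_fromP[j j_ge2 ->]; rewrite cabs_distC.
  by have := x_far j 1 j_ge2; rewrite seg_pt1 lexx ler01; apply.
- by rewrite rs_size prednK.
- by apply/allP => r /values_fromP[j j_ge2 ->]; apply/rootP; apply: P_xj.
- exact: ltW.
Qed.
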